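(* Let $\mathbb S=\{(X_1,X_2,A)\in\mathbb C^2\times\mathbb R: -2\,\mathrm{Re}(X_1+X_2)-2\,\mathrm{Re}(X_1\overline{X}_2e^{-2iA})+|X_1|^2+|X_2|^2+1=0\}$ and $\mathbb S_{123}=\{(X_1,X_2,A)\in\mathbb C^2\times\mathbb R:\mathrm{Re}(e^{iA})=0\}$. Writing $X_1=a+bi$, $X_2=c+di$, the intersection $\mathbb S\cap\mathbb S_{123}$ is not transversal; it is a union of $2$-dimensional real analytic varieties, given by the equations $a+c=1$, $b+d=0$, $A=\pm\pi/2+2k\pi$ ($k\in\mathbb Z$). *)

From Stdlib Require Import Reals ZArith.
From Coquelicot Require Import Coquelicot.
Open Scope R_scope.

Definition expi (t : R) : C := (cos t, sin t).

Definition FS (X1 X2 : C) (A : R) : R :=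
  -2 * Re (Cplus X1 X2)
  - 2 * Re (Cmult (Cmult X1 (Cconj X2)) (expi (-2 * A)))
  + Cmod X1 ^ 2 + Cmod X2 ^ 2 + 1.

Definition G123 (X1 X2 : C) (A : R) : R := Re (expi A).

Definition in_S (X1 X2 : C) (A : R) : Prop := FS X1 X2 A = 0.
Definition in_S123 (X1 X2 : C) (A : R) : Prop := G123 X1 X2 A = 0.

Definition grad (f : C -> C -> R -> R) (X1 X2 : C) (A : R) : R * R * R * R * R :=
  let a := Re X1 in let b := Im X1 in let c := Re X2 in let d := Im X2 in
  (Derive (fun t => f (t, b) (c, d) A) a,
   Derive (fun t => f (a, t) (c, d) A) b,
   Derive (fun t => f (a, b) (t, d) A) c,
   Derive (fun t => f (a, b) (c, t) A) d,
   Derive (fun t => f (a, b) (c, d) t) A).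

(* The hypersurfaces S = {FS = 0} and S_123 = {G123 = 0} of C^2 x R = R^5
   intersect transversally at p iff their normal vectors (gradients of the
   defining functions) are linearly independent at p. *)
Definition transversal_at (X1 X2 : C) (A : R) : Prop :=
  let '(f1, f2, f3, f4, f5) := grad FS X1 X2 A in
  let '(g1, g2, g3, g4, g5) := grad G123 X1 X2 A in
  forall l m : R,
    l * f1 + m * g1 = 0 -> l * f2 + m * g2 = 0 -> l * f3 + m * g3 = 0 ->
    l * f4 + m * g4 = 0 -> l * f5 + m * g5 = 0 -> l = 0 /\ m = 0.

(** On [S_123] we have [cos A = 0], hence [e^{-2iA} = -1], and the defining
    function of [S] collapses to the sum of squares [(a+c-1)^2 + (b+d)^2].
    This gives the description of the intersection, and it also shows that
    the gradient of the defining function of [S] has no component in the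
    [(a,b,c,d)] directions there; the gradient of [Re e^{iA}] points in the
    [A] direction only, so the two normals are parallel at every point of
    the intersection. *)
From Stdlib Require Import Reals ZArith Lra Psatz.
From Coquelicot Require Import Coquelicot.
Open Scope R_scope.

Lemma FS_coords a b c d A :
  FS (a, b) (c, d) A =
  -2 * (a + c) - 2 * ((a * c + b * d) * cos (-2 * A) - (b * c - a * d) * sin (-2 * A))
  + (a ^ 2 + b ^ 2) + (c ^ 2 + d ^ 2) + 1.
Proof.
  unfold FS, expi, Cmod; simpl fst; simpl snd.
  rewrite !pow2_sqrt by nra.
  simpl; ring.
Qed.

Lemma cos_sin_neg_double_of_cos_eq0 A :
  cos A = 0 -> cos (-2 * A) = -1 /\ sin (-2 * A) = 0.
Proof.
  intros HA; replace (-2 * A) with (- (2 * A)) by ring.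
  rewrite cos_neg, sin_neg, cos_2a_cos, sin_2a, HA; split; ring.
Qed.

Lemma FS_cos_eq0 a b c d A :
  cos A = 0 -> FS (a, b) (c, d) A = (a + c - 1) ^ 2 + (b + d) ^ 2.
Proof.
  intros HA; destruct (cos_sin_neg_double_of_cos_eq0 A HA) as [Hc Hs].
  rewrite FS_coords, Hc, Hs; ring.
Qed.

Lemma sum_sqr_eq0 x y : x ^ 2 + y ^ 2 = 0 <-> x = 0 /\ y = 0.
Proof.
  split.
  - intros Hxy; pose proof (pow2_ge_0 x); pose proof (pow2_ge_0 y); split; nra.
  - intros [-> ->]; ring.
Qed.

Lemma cos_eq0_iff A :
  cos A = 0 <->
  exists k : Z, A = PI / 2 + 2 * IZR k * PI \/ A = - (PI / 2) + 2 * IZR k * PI.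
Proof.
  split.
  - intros HA; destruct (cos_eq_0_0 A HA) as [k Hk].
    destruct (Z.Even_or_Odd k) as [[m ->] | [m ->]].
    + exists m; left; rewrite Hk, mult_IZR; lra.
    + exists (m + 1)%Z; right; rewrite Hk, !plus_IZR, mult_IZR; lra.
  - intros [k [-> | ->]]; apply cos_eq_0_1.
    + exists (2 * k)%Z; rewrite mult_IZR; lra.
    + exists (2 * k - 1)%Z; rewrite minus_IZR, mult_IZR; lra.
Qed.

Lemma in_S_S123_iff a b c d A :
  in_S (a, b) (c, d) A /\ in_S123 (a, b) (c, d) A <->
  a + c = 1 /\ b + d = 0 /\ cos A = 0.
Proof.
  unfold in_S, in_S123, G123, expi; simpl Re.
  split.
  - intros [HS HA]; rewrite FS_cos_eq0, sum_sqr_eq0 in HS by exact HA; lra.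
  - intros (Hac & Hbd & HA); rewrite FS_cos_eq0, sum_sqr_eq0 by exact HA; lra.
Qed.

Lemma grad_G123 X1 X2 A : grad G123 X1 X2 A = (0, 0, 0, 0, - sin A).
Proof.
  unfold grad, G123, expi; simpl Re.
  rewrite !Derive_const; repeat f_equal.
  apply is_derive_unique; auto_derive; auto; ring.
Qed.

(* Along [S_123] the partial derivatives in [a, b, c, d] are those of the
   sum of squares, which vanish where both squares do. *)
Lemma grad_FS_on_S_S123 X1 X2 A :
  in_S X1 X2 A -> in_S123 X1 X2 A ->
  exists f5, grad FS X1 X2 A = (0, 0, 0, 0, f5).
Proof.
  destruct X1 as [a b], X2 as [c d]; intros HS HA.
  destruct (proj1 (in_S_S123_iff a b c d A) (conj HS HA)) as (Hac & Hbd & Hcos).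
  exists (Derive (fun t => FS (a, b) (c, d) t) A).
  unfold grad; simpl Re; simpl Im.
  rewrite (Derive_ext (fun t => FS (t, b) (c, d) A) (fun t => (t + c - 1) ^ 2 + (b + d) ^ 2)),
    (Derive_ext (fun t => FS (a, t) (c, d) A) (fun t => (a + c - 1) ^ 2 + (t + d) ^ 2)),
    (Derive_ext (fun t => FS (a, b) (t, d) A) (fun t => (a + t - 1) ^ 2 + (b + d) ^ 2)),
    (Derive_ext (fun t => FS (a, b) (c, t) A) (fun t => (a + c - 1) ^ 2 + (b + t) ^ 2))
    by (intro; apply FS_cos_eq0, Hcos).
  repeat f_equal; apply is_derive_unique; auto_derive; auto; nra.
Qed.

Lemma not_transversal_at_S_S123 X1 X2 A :
  in_S X1 X2 A -> in_S123 X1 X2 A -> ~ transversal_at X1 X2 A.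
Proof.
  intros HS HA Htr.
  destruct (grad_FS_on_S_S123 X1 X2 A HS HA) as [f5 Hf].
  unfold transversal_at in Htr; rewrite Hf, grad_G123 in Htr.
  assert (Hsin : sin A <> 0).
  { unfold in_S123, G123, expi in HA; simpl in HA.
    pose proof (sin2_cos2 A); unfold Rsqr in *; nra. }
  destruct (Htr (sin A) f5) as [Hl _]; try ring; contradiction.
Qed.

Theorem proposition3p6 :
  (* the intersection is not transversal *)
  ~ (forall (X1 X2 : C) (A : R),
       in_S X1 X2 A -> in_S123 X1 X2 A -> transversal_at X1 X2 A)
  /\
  (* description of S ∩ S_123, with X1 = a + b i, X2 = c + d i *)
  (forall (X1 X2 : C) (A : R),
     (in_S X1 X2 A /\ in_S123 X1 X2 A) <->
     (Re X1 + Re X2 = 1 /\ Im X1 + Im X2 = 0 /\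
      exists k : Z, A = PI / 2 + 2 * IZR k * PI \/ A = - (PI / 2) + 2 * IZR k * PI)).
Proof.
  split.
  - intros Hall.
    assert (Hcos : cos (PI / 2) = 0) by (apply cos_eq0_iff; exists 0%Z; left; ring).
    assert (Hp : in_S (1, 0) (0, 0) (PI / 2) /\ in_S123 (1, 0) (0, 0) (PI / 2))
      by (apply in_S_S123_iff; lra).
    destruct Hp as [HS HA].
    exact (not_transversal_at_S_S123 _ _ _ HS HA (Hall _ _ _ HS HA)).
  - intros [a b] [c d] A; simpl Re; simpl Im.
    rewrite in_S_S123_iff, cos_eq0_iff; tauto.
Qed.
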